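(* Let $\{a_n\}_{n\ge1}$ be a sequence of positive real numbers. Suppose there are positive real numbers $r_1,r_2$ such that for all sufficiently large $n$ \[ \frac{a_{2n}}{a_n}<\frac{1}{2+r_1}\quad\text{and}\quad\frac{a_{2n+1}}{a_n}<\frac{1}{2+r_2}. \] Then $\sum_{n=1}^\infty a_n$ converges. *)

From Stdlib Require Import Reals.
From Coquelicot Require Import Coquelicot.

(** For [n >= m0] the two children [2n], [2n+1] of [n] carry at most [c]
    times the mass of [n], with [c = 1/(2+r1) + 1/(2+r2) < 1].  Summing over
    [m0 <= n < m] gives, for [T m = a m0 + ... + a (m-1)],
    [T (2m) <= T (2m0) + c T m <= T (2m0) + c T (2m)], so [T (2m)] stays below
    [T (2m0) / (1 - c)]: the partial sums of the eventually nonnegative series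
    are bounded. *)

From Stdlib Require Import Reals Lra Lia.
From Coquelicot Require Import Coquelicot.
Open Scope R_scope.

Fixpoint partial_sum (a : nat -> R) (n : nat) : R :=
  match n with O => 0 | S n' => partial_sum a n' + a n' end.

Lemma sum_n_partial_sum (a : nat -> R) (n : nat) :
  sum_n a n = partial_sum a (S n).
Proof.
  induction n as [|n IH].
  - rewrite sum_O; simpl; ring.
  - rewrite sum_Sn, IH; simpl; unfold plus; simpl; ring.
Qed.

Lemma partial_sum_shift (a : nat -> R) (m k : nat) :
  partial_sum (fun i => a (m + i)%nat) k = partial_sum a (m + k) - partial_sum a m.
Proof.
  induction k as [|k IH]; simpl.
  - rewrite Nat.add_0_r; ring.
  - rewrite IH, Nat.add_succ_r; simpl; ring.
Qed.

Section EventuallyNonnegative.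

Variables (a : nat -> R) (m0 : nat).
Hypothesis a_ge0 : forall n, (m0 <= n)%nat -> 0 <= a n.

Lemma partial_sum_le (m n : nat) :
  (m0 <= m)%nat -> (m <= n)%nat -> partial_sum a m <= partial_sum a n.
Proof.
  intros Hm Hmn; induction Hmn as [|n Hmn IH]; simpl.
  - lra.
  - pose proof (a_ge0 n ltac:(lia)); lra.
Qed.

Lemma ex_series_of_bounded_partial_sums (M : R) :
  (forall n, (m0 <= n)%nat -> partial_sum a n <= M) -> ex_series a.
Proof.
  intros Hbound.
  apply (ex_series_incr_n a m0).
  set (b := fun k => a (m0 + k)%nat).
  assert (Hsum : forall k, sum_n b k = partial_sum a (m0 + S k) - partial_sum a m0)
    by (intros k; rewrite sum_n_partial_sum; apply partial_sum_shift).
  destruct (ex_finite_lim_seq_incr (sum_n b) (M - partial_sum a m0)) as [l Hl].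
  - intros k; rewrite !Hsum; apply Rplus_le_compat_r, partial_sum_le; lia.
  - intros k; rewrite Hsum; pose proof (Hbound (m0 + S k)%nat ltac:(lia)); lra.
  - exists l; exact Hl.
Qed.

Variable c : R.
Hypothesis c_ge0 : 0 <= c.
Hypothesis c_lt1 : c < 1.
Hypothesis children_le : forall n, (m0 <= n)%nat -> a (2 * n) + a (2 * n + 1) <= c * a n.

Lemma partial_sum_double_le (m : nat) : (m0 <= m)%nat ->
  partial_sum a (2 * m) - partial_sum a (2 * m0)
  <= c * (partial_sum a m - partial_sum a m0).
Proof.
  intros Hm; induction Hm as [|m Hm IH].
  - lra.
  - replace (2 * S m)%nat with (S (S (2 * m))) by lia; cbn [partial_sum].
    pose proof (children_le m Hm) as Hc.
    replace (2 * m + 1)%nat with (S (2 * m)) in Hc by lia.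
    lra.
Qed.

Lemma partial_sum_double_bounded (m : nat) : (m0 <= m)%nat ->
  partial_sum a (2 * m) - partial_sum a m0
  <= (partial_sum a (2 * m0) - partial_sum a m0) / (1 - c).
Proof.
  intros Hm.
  pose proof (partial_sum_double_le m Hm) as Hdouble.
  assert (Hmono : partial_sum a m <= partial_sum a (2 * m))
    by (apply partial_sum_le; lia).
  apply Rmult_le_reg_r with (1 - c); [lra|].
  unfold Rdiv; rewrite Rmult_assoc, Rinv_l, Rmult_1_r by lra.
  nra.
Qed.

Lemma ex_series_of_children_le : ex_series a.
Proof.
  apply (ex_series_of_bounded_partial_sums
           (partial_sum a m0
            + (partial_sum a (2 * m0) - partial_sum a m0) / (1 - c))).
  intros n Hn.
  pose proof (partial_sum_double_bounded n Hn).
  assert (partial_sum a n <= partial_sum a (2 * n)) by (apply partial_sum_le; lia).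
  lra.
Qed.

End EventuallyNonnegative.

Lemma inv_2_add_lt_half (r : R) : 0 < r -> 1 / (2 + r) < 1 / 2.
Proof.
  intros Hr; apply Rmult_lt_compat_l; [lra|]; apply Rinv_lt_contravar; nra.
Qed.

Theorem corollary2p1p3 (a : nat -> R) (r1 r2 : R) :
  (forall n : nat, (1 <= n)%nat -> 0 < a n) ->
  0 < r1 -> 0 < r2 ->
  (exists N : nat, forall n : nat, (N <= n)%nat -> (1 <= n)%nat ->
      a (2 * n)%nat / a n < 1 / (2 + r1) /\
      a (2 * n + 1)%nat / a n < 1 / (2 + r2)) ->
  ex_series (fun n : nat => a (S n)).
Proof.
  intros a_gt0 r1_gt0 r2_gt0 [N Hratio].
  apply (ex_series_incr_1 a).
  set (c := 1 / (2 + r1) + 1 / (2 + r2)).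
  apply ex_series_of_children_le with (m0 := Nat.max N 1) (c := c).
  - intros n Hn; apply Rlt_le, a_gt0; lia.
  - unfold c; pose proof (Rdiv_lt_0_compat 1 (2 + r1) Rlt_0_1 ltac:(lra)).
    pose proof (Rdiv_lt_0_compat 1 (2 + r2) Rlt_0_1 ltac:(lra)); lra.
  - unfold c; pose proof (inv_2_add_lt_half r1 r1_gt0).
    pose proof (inv_2_add_lt_half r2 r2_gt0); lra.
  - intros n Hn.
    destruct (Hratio n ltac:(lia) ltac:(lia)) as [Heven Hodd].
    pose proof (a_gt0 n ltac:(lia)) as Hn_pos.
    apply (Rlt_div_l _ _ _ Hn_pos) in Heven.
    apply (Rlt_div_l _ _ _ Hn_pos) in Hodd.
    unfold c; lra.
Qed.
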